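(* Let $\{e_i\}_{i=1}^\infty$ be the canonical orthonormal basis of the real Hilbert space $\ell_2$, and let $a_i\neq0$ ($i=1,2,\dots$) be real numbers with $\sum_{i=1}^\infty a_i^2<\infty$. Define $x_k=a_k(e_1+e_{k+1})$ for $k=1,2,\dots$, and let $L$ be the right shift operator on $\ell_2$, $L(c_1,c_2,\dots)=(0,c_1,c_2,\dots)$. Then the family \[ \{e_i\}_{i=1}^\infty\cup\{2^{-i}L^ix_k\}_{i=0,\,k=1}^{\infty,\ \infty}\] is a frame for $\ell_2$ which is injective.
   Context: A family $\{y_k\}$ in $\ell_2$ is called injective if whenever a Hilbert–Schmidt self-adjoint operator $T$ on $\ell_2$ satisfies $\langle Ty_k,y_k\rangle=0$ for all $k$, then $T=0$. *)

(* Real sequence space l2 over an abstract realType R,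
   indices shifted to start at 0 (e_1 of the paper is unit 0). *)
From HB Require Import structures.
From mathcomp Require Import all_boot all_order all_algebra.
From mathcomp Require Import all_classical all_reals all_analysis.
Set Implicit Arguments. Unset Strict Implicit. Unset Printing Implicit Defensive.
Import Order.TTheory GRing.Theory Num.Theory numFieldNormedType.Exports.
Local Open Scope classical_set_scope.
Local Open Scope ring_scope.

Section L2.
Variable R : realType.

Definition ell2 (x : nat -> R) : Prop :=
  (\esum_(k in [set: nat]) ((x k) ^+ 2)%:E < +oo)%E.

Definition l2inner (x y : nat -> R) : R := limn (series (fun k => x k * y k) : R^nat).

Definition l2norm2 (x : nat -> R) : R := l2inner x x.

Definition unitv (i : nat) : nat -> R := fun n => if n == i then 1 else 0.

Definition rshift (c : nat -> R) : nat -> R :=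
  fun n => if n is n'.+1 then c n' else 0.

Definition is_frame (I : choiceType) (y : I -> nat -> R) : Prop :=
  (forall i, ell2 (y i)) /\
  exists A B : R, 0 < A /\ 0 < B /\
    forall x, ell2 x ->
      ((A * l2norm2 x)%:E <= \esum_(i in [set: I]) ((l2inner x (y i)) ^+ 2)%:E)%E /\
      (\esum_(i in [set: I]) ((l2inner x (y i)) ^+ 2)%:E <= (B * l2norm2 x)%:E)%E.

(* bounded linear operator on l2 (values off l2 are irrelevant) *)
Definition bounded_linear_op (T : (nat -> R) -> nat -> R) : Prop :=
  (forall x, ell2 x -> ell2 (T x)) /\
  (forall (a : R) x y, ell2 x -> ell2 y ->
     T (fun n => a * x n + y n) = (fun n => a * T x n + T y n)) /\
  (exists C : R, forall x, ell2 x -> l2norm2 (T x) <= C * l2norm2 x).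

Definition hilbert_schmidt (T : (nat -> R) -> nat -> R) : Prop :=
  bounded_linear_op T /\
  (\esum_(i in [set: nat]) (l2norm2 (T (unitv i)))%:E < +oo)%E.

Definition self_adjoint (T : (nat -> R) -> nat -> R) : Prop :=
  forall x y, ell2 x -> ell2 y -> l2inner (T x) y = l2inner x (T y).

Definition injective_family (I : choiceType) (y : I -> nat -> R) : Prop :=
  forall T, hilbert_schmidt T -> self_adjoint T ->
    (forall k, l2inner (T (y k)) (y k) = 0) ->
    forall x, ell2 x -> T x = (fun _ => 0).

(* x_k = a_k (e_1 + e_{k+1}), 0-indexed: x k = a k (e 0 + e (k+1)) *)
Definition xvec (a : nat -> R) (k : nat) : nat -> R :=
  fun n => a k * (unitv 0 n + unitv k.+1 n).

Definition thm_family (a : nat -> R) (j : nat + (nat * nat)) : nat -> R :=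
  match j with
  | inl i => unitv i
  | inr (i, k) => fun n => (2 ^- i) * iter i rshift (xvec a k) n
  end.

End L2.

(* The unit vectors e_i alone form a Parseval frame, which gives the lower frame
   bound 1. In 0-based indexing 2^-i L^i x_k = 2^-i a_k (e_i + e_(i+k+1)), whose inner
   product with x has square at most 4 * 4^-i a_k^2 |x|^2; summing the geometric series
   in i gives the upper bound 1 + (16/3) sum_k a_k^2.
   For injectivity, <T e_p, e_p> = 0 kills the diagonal of the matrix of T, and then,
   by symmetry, <T y, y> = 0 for y = c (e_i + e_(i+k+1)) with c <> 0 forces
   T_(i, i+k+1) = 0. Every off-diagonal entry is of this form, so all columns T e_p
   vanish and self-adjointness gives T x = 0. *)

From Pilot Require Import Defs.
From HB Require Import structures.
From mathcomp Require Import all_boot all_order all_algebra.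
From mathcomp Require Import all_classical all_reals all_analysis.
From mathcomp Require Import ring lra.
Import Order.TTheory GRing.Theory Num.Theory numFieldNormedType.Exports.
Local Open Scope classical_set_scope.
Local Open Scope ring_scope.

Section Esum.
Context {R : realType}.

Lemma esumZl (T : choiceType) (S : set T) (r : R) (f : T -> \bar R) :
  (0 <= r) -> (forall i, S i -> 0 <= f i)%E ->
  (\esum_(i in S) (r%:E * f i) = r%:E * \esum_(i in S) f i)%E.
Proof.
move=> r0 f0; rewrite /esum -ereal_supZl//; last first.
  by apply/set0P; exists 0%E, set0; [exact: fsets_set0 | rewrite fsbig_set0].
rewrite image_comp; congr ereal_sup; apply: eq_imagel => A [finA AS] /=.
rewrite !fsbig_finite//= !big_seq ge0_sume_distrr// => i.
by rewrite in_fset_set// inE => /AS/f0.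
Qed.

Lemma esum_sumType (A B : choiceType) (f : A + B -> \bar R) :
  (forall j, 0 <= f j)%E ->
  (\esum_(j in [set: A + B]) f j =
   \esum_(i in [set: A]) f (inl i) + \esum_(p in [set: B]) f (inr p))%E.
Proof.
move=> f0; rewrite (esumID (range inl)) // setTI.
have -> : [set: A + B] `&` ~` range inl = range inr.
  apply/seteqP; split => -[i|p] //=.
  - by case=> _ []; exists i.
  - by move=> _; exists p.
  - by case.
  - by move=> _; split=> // -[].
by rewrite !esum_image //; move=> u v _ _ [].
Qed.

Lemma series_EFin_lim (g : nat -> R) : cvgn (series g) ->
  (\sum_(k <oo) (g k)%:E)%E = (limn (series g))%:E.
Proof.
by move=> cg; rewrite -EFin_lim //; apply/congr_lim/funext => n /=; rewrite sumEFin.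
Qed.

Lemma esum_geometric (q : R) : 0 <= q < 1 ->
  (\esum_(i in [set: nat]) (q ^+ i)%:E = (1 - q)^-1%:E)%E.
Proof.
case/andP=> q0 q1; have qn : `|q| < 1 by rewrite ger0_norm.
have := @cvg_geometric_series _ 1 _ qn; rewrite mul1r => cq.
rewrite -nneseries_esumT => [|i]; last by rewrite lee_fin exprn_ge0.
under eq_eseriesr do rewrite -[q ^+ _]mul1r.
by rewrite (series_EFin_lim (geometric 1 q) (cvgP _ cq)) (cvg_lim _ cq).
Qed.

Lemma esum_geometric_prod (c q S : R) (f : nat -> R) :
  0 <= c -> 0 <= q < 1 -> (forall k, 0 <= f k) ->
  (\esum_(k in [set: nat]) (f k)%:E)%E = S%:E ->
  (\esum_(p in [set: nat * nat]) (c * q ^+ p.1 * f p.2)%:E)%E = (c * S / (1 - q))%:E.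
Proof.
move=> c0 /[dup] /andP[q0 _] q01 f0 fS.
have cq0 i : 0 <= c * q ^+ i by rewrite mulr_ge0 ?exprn_ge0.
have S0 : 0 <= S by rewrite -lee_fin -fS esum_ge0 // => k _; rewrite lee_fin.
have -> : [set: nat * nat] = [set: nat] `*`` (fun=> [set: nat]).
  by apply/seteqP; split => -[].
rewrite (eq_esum (b := fun p => (c * q ^+ p.1 * f p.2)%:E)) => [|[] //].
rewrite -(esum_esum (a := fun i k => (c * q ^+ i * f k)%:E)) => [|i k _ _]; last first.
  by rewrite lee_fin mulr_ge0.
rewrite (eq_esum (b := fun i => ((c * S)%:E * (q ^+ i)%:E)%E)) => [|i _]; last first.
  under eq_esum do rewrite EFinM.
  by rewrite esumZl // => [|k _]; rewrite ?lee_fin // fS -!EFinM mulrAC.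
rewrite esumZl ?mulr_ge0 //; last by move=> i _; rewrite lee_fin exprn_ge0.
by rewrite esum_geometric // -EFinM.
Qed.

End Esum.

Section Ell2.
Context {R : realType}.
Implicit Types (x y f : nat -> R) (c : R) (i j k N : nat).

Definition pairv c i j : nat -> R := fun n => c * (unitv R i n + unitv R j n).

Lemma series_eventually0 f N : (forall k, (N <= k)%N -> f k = 0) ->
  series f @ \oo --> \sum_(0 <= k < N) f k.
Proof.
move=> f0; apply: cvg_near_cst; near=> n.
rewrite /series/= (@big_cat_nat _ _ _ N 0 n) //=; last by near: n; apply: nbhs_infty_ge.
by rewrite [X in _ + X]big_nat_cond [X in _ + X]big1 ?addr0// => k /andP[/andP[/f0]].
Unshelve. all: by end_near.
Qed.

Lemma ell2_eventually0 f N : (forall k, (N <= k)%N -> f k = 0) -> ell2 f.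
Proof.
move=> f0; rewrite /ell2 -nneseries_esumT => [|k]; last by rewrite lee_fin sqr_ge0.
rewrite series_EFin_lim ?ltry//; apply: cvgP.
by apply: (series_eventually0 _ N) => k /f0 ->; rewrite expr0n.
Qed.

Lemma ell2_unitv i : ell2 (unitv R i).
Proof. by apply: (ell2_eventually0 _ i.+1) => k ik; rewrite /unitv gtn_eqF. Qed.

Lemma ell2_pairv c i j : ell2 (pairv c i j).
Proof.
apply: (ell2_eventually0 _ (i + j).+1) => k ijk.
by rewrite /pairv /unitv !gtn_eqF ?addr0 ?mulr0 //; apply: leq_trans ijk;
  rewrite ltnS ?leq_addr ?leq_addl.
Qed.

Lemma l2innerC x y : l2inner x y = l2inner y x.
Proof. by rewrite /l2inner; under eq_fun do rewrite mulrC. Qed.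

Lemma sum_mul_unitv y i N : (i < N)%N -> \sum_(0 <= k < N) y k * unitv R i k = y i.
Proof.
move=> iN; rewrite big_mkord (bigD1 (Ordinal iN)) //= big1 ?addr0 => [|k /negbTE ki].
  by rewrite /unitv eqxx mulr1.
by rewrite /unitv ifF ?mulr0 //; exact: ki.
Qed.

Lemma l2inner_unitv y i : l2inner y (unitv R i) = y i.
Proof.
rewrite /l2inner (cvg_lim _ (series_eventually0 _ i.+1 _)) ?sum_mul_unitv //.
by move=> k ik; rewrite /unitv gtn_eqF ?mulr0.
Qed.

Lemma l2inner_pairv y c i j : l2inner y (pairv c i j) = c * (y i + y j).
Proof.
have [iN jN] : (i < (i + j).+1)%N /\ (j < (i + j).+1)%N by rewrite !ltnS leq_addr leq_addl.
rewrite /l2inner (cvg_lim _ (series_eventually0 _ (i + j).+1 _)) //; last first.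
  move=> k /[dup] /(leq_trans iN) ? /(leq_trans jN) ?.
  by rewrite /pairv /unitv !gtn_eqF ?addr0 ?mulr0.
under eq_bigr do rewrite mulrCA mulrDr.
by rewrite -mulr_sumr big_split /= !sum_mul_unitv.
Qed.

Lemma l2norm2E x : ell2 x ->
  (l2norm2 x)%:E = (\esum_(k in [set: nat]) (x k ^+ 2)%:E)%E.
Proof.
move=> x2; have x0 k : (0 <= (x k ^+ 2)%:E)%E by rewrite lee_fin sqr_ge0.
rewrite -nneseries_esumT // series_EFin_lim //.
by apply: nnseries_is_cvg => [k|]; [exact: sqr_ge0 | rewrite nneseries_esumT].
Qed.

Lemma sqr_le_l2norm2 x i : ell2 x -> x i ^+ 2 <= l2norm2 x.
Proof.
move=> x2; rewrite -lee_fin l2norm2E //; apply: esum_ge; exists [set i].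
  by split => //; exact: finite_set1.
by rewrite fsbig_set1.
Qed.

Lemma sqr_l2inner_pairv_le x c i j : ell2 x ->
  l2inner x (pairv c i j) ^+ 2 <= 4 * c ^+ 2 * l2norm2 x.
Proof.
move=> x2; have xi := sqr_le_l2norm2 x i x2; have xj := sqr_le_l2norm2 x j x2.
have : (x i + x j) ^+ 2 <= 4 * l2norm2 x by nra.
rewrite -subr_ge0 => /(mulr_ge0 (sqr_ge0 c)).
by rewrite l2inner_pairv exprMn; nra.
Qed.

Lemma iter_rshift_pairv m c i j :
  iter m (@Defs.rshift R) (pairv c i j) = pairv c (m + i) (m + j).
Proof.
elim: m => [|m IH] //=; apply/funext => -[|n] /=; first by rewrite /pairv /unitv addr0 mulr0.
by rewrite IH.
Qed.

End Ell2.

#[local] Hint Resolve ell2_unitv ell2_pairv : core.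

Section Operators.
Variables (R : realType) (T : (nat -> R) -> nat -> R).
Hypothesis T_self_adjoint : self_adjoint T.
Hypothesis T_linear : forall (c : R) x y, ell2 x -> ell2 y ->
  T (fun n => c * x n + y n) = (fun n => c * T x n + T y n).

Lemma self_adjoint_unitvC p q : T (unitv R p) q = T (unitv R q) p.
Proof.
by rewrite -(l2inner_unitv (T _) q) T_self_adjoint // l2innerC l2inner_unitv.
Qed.

Lemma self_adjoint_eq0 : (forall p, T (unitv R p) = fun _ => 0) ->
  forall x, ell2 x -> T x = fun _ => 0.
Proof.
move=> Te0 x x2; apply/funext => m.
rewrite -l2inner_unitv T_self_adjoint // Te0.
rewrite /l2inner (cvg_lim _ (series_eventually0 _ 0 _)) ?big_geq // => k _.
exact: mulr0.
Qed.

Lemma linear_op0 : T (fun _ => 0) = fun _ => 0.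
Proof.
have ell2_0 : ell2 (fun _ : nat => 0 : R) by apply: (ell2_eventually0 _ 0).
have := T_linear 1 _ _ ell2_0 ell2_0; under eq_fun do rewrite mul1r addr0.
move=> T00; apply/funext => n; have /= := congr1 (fun f => f n) T00.
rewrite mul1r; set t := T _ n; lra.
Qed.

Lemma linear_op_pairv c i j :
  T (pairv c i j) = fun n => c * (T (unitv R i) n + T (unitv R j) n).
Proof.
have -> : pairv c i j = fun n => c * (1 * unitv R i n + unitv R j n) + 0.
  by apply/funext => n; rewrite mul1r addr0.
rewrite (T_linear c _ _ _ (ell2_eventually0 _ 0 _)) // ?T_linear // ?linear_op0.
  by apply/funext => n; rewrite mul1r addr0.
suff -> : (fun n => 1 * unitv R i n + unitv R j n) = pairv 1 i j by [].
by apply/funext => n; rewrite /pairv !mul1r.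
Qed.

Lemma l2inner_op_pairv c i j : l2inner (T (pairv c i j)) (pairv c i j) =
  c ^+ 2 * (T (unitv R i) i + T (unitv R j) j + 2 * T (unitv R i) j).
Proof.
by rewrite l2inner_pairv linear_op_pairv (self_adjoint_unitvC j i); ring.
Qed.

End Operators.

Section Family.
Context {R : realType}.
Variable a : nat -> R.

Lemma thm_family_inr i k :
  thm_family a (inr (i, k)) = pairv (2 ^- i * a k) i (i + k.+1).
Proof.
rewrite /=; change (xvec a k) with (pairv (a k) 0 k.+1).
rewrite iter_rshift_pairv addn0.
by apply/funext => n; rewrite /pairv mulrA.
Qed.

Lemma ell2_thm_family j : ell2 (thm_family a j).
Proof. by case: j => [i|[i k]]; [exact: ell2_unitv | rewrite thm_family_inr]. Qed.

Lemma thm_family_lower x : ell2 x ->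
  ((l2norm2 x)%:E <= \esum_(j in [set: nat + nat * nat])
                       (l2inner x (thm_family a j) ^+ 2)%:E)%E.
Proof.
move=> x2; rewrite esum_sumType => [|j]; last by rewrite lee_fin sqr_ge0.
under eq_esum do rewrite /= l2inner_unitv.
rewrite -l2norm2E // leeDl // esum_ge0 // => p _; exact: sqr_ge0.
Qed.

Lemma sqr_l2inner_thm_family_le x i k : ell2 x ->
  l2inner x (thm_family a (inr (i, k))) ^+ 2 <= 4 * l2norm2 x * 4^-1 ^+ i * a k ^+ 2.
Proof.
move=> x2; rewrite thm_family_inr.
apply: le_trans (sqr_l2inner_pairv_le _ _ _ _ x2) _.
have -> : (2 ^- i * a k) ^+ 2 = 4^-1 ^+ i * a k ^+ 2.
  by rewrite exprMn -exprVn -exprM mulnC exprM; congr (_ ^+ _ * _); rewrite exprVn -natrX.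
by rewrite mulrAC mulrA.
Qed.

Lemma thm_family_upper x S : ell2 x ->
  (\esum_(k in [set: nat]) (a k ^+ 2)%:E)%E = S%:E ->
  (\esum_(j in [set: nat + nat * nat]) (l2inner x (thm_family a j) ^+ 2)%:E
     <= ((1 + 16 / 3 * S) * l2norm2 x)%:E)%E.
Proof.
move=> x2 aS; set N := l2norm2 x.
have N0 : 0 <= N by apply: le_trans (sqr_le_l2norm2 x 0 x2); exact: sqr_ge0.
rewrite esum_sumType => [|j]; last by rewrite lee_fin sqr_ge0.
under eq_esum do rewrite /= l2inner_unitv.
rewrite -l2norm2E // mulrDl mul1r EFinD leeD2l //.
apply: le_trans (le_esum (b := fun p => (4 * N * 4^-1 ^+ p.1 * a p.2 ^+ 2)%:E) _) _.
  by move=> -[i k] _; rewrite lee_fin sqr_l2inner_thm_family_le.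
rewrite (esum_geometric_prod (4 * N) 4^-1 _ _ _ _ _ aS) ?mulr_ge0 //.
- suff -> : 4 * N * S / (1 - 4^-1) = 16 / 3 * S * N by [].
  by field.
- by rewrite invr_ge0 invf_lt1 ?ler0n ?ltr1n.
- by move=> k; exact: sqr_ge0.
Qed.

Lemma injective_thm_family : (forall k, a k != 0) -> injective_family (thm_family a).
Proof.
move=> a0 T [[_ [Tlin _]] _] Tsa Tfam.
have Tdiag p : T (unitv R p) p = 0 by have := Tfam (inl p); rewrite /= l2inner_unitv.
have Toff i k : T (unitv R i) (i + k.+1) = 0.
  have := Tfam (inr (i, k)); rewrite thm_family_inr l2inner_op_pairv // !Tdiag.
  have c0 : (2 ^- i * a k) ^+ 2 != 0.
    by rewrite sqrf_eq0 mulf_neq0 ?a0 // invr_eq0 expf_eq0 pnatr_eq0.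
  by rewrite !add0r => /eqP; rewrite mulf_eq0 (negPf c0) mulf_eq0 pnatr_eq0 => /eqP.
apply: self_adjoint_eq0 => // p; apply/funext => q.
have [pq|qp|<-] := ltngtP p q; last exact: Tdiag.
- by rewrite -(subnKC pq) addSnnS Toff.
- by rewrite self_adjoint_unitvC // -(subnKC qp) addSnnS Toff.
Qed.

End Family.

Theorem mainTheorem14 (R : realType) (a : nat -> R)
  (ha0 : forall k, a k != 0)
  (hsum : (\esum_(k in [set: nat]) ((a k) ^+ 2)%:E < +oo)%E) :
  is_frame (thm_family a) /\ injective_family (thm_family a).
Proof.
split; last exact: injective_thm_family.
have S0 : (0 <= \esum_(k in [set: nat]) (a k ^+ 2)%:E)%E.
  by apply: esum_ge0 => k _; rewrite lee_fin sqr_ge0.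
set S := fine (\esum_(k in [set: nat]) (a k ^+ 2)%:E)%E.
have aS : (\esum_(k in [set: nat]) (a k ^+ 2)%:E)%E = S%:E by rewrite fineK // ge0_fin_numE.
split; first exact: ell2_thm_family.
exists 1, (1 + 16 / 3 * S); do 2 split => //.
  by rewrite ltr_pwDl // mulr_ge0 // fine_ge0.
move=> x x2; split; first by rewrite mul1r thm_family_lower.
exact: thm_family_upper.
Qed.
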